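(* In the hierarchical partition construction described in the context, with $|V|=n$, the number of distinct sets occurring in the partitions $\mathcal S_0,\mathcal S_1,\ldots$ is at most $2n-1$, and the number of unordered pairs $\{A,B\}$ of distinct such sets for which there is a level $j$ with $A,B\in\mathcal S_j$ and $A$ knows $B$ at level $j$ is at most $(2n-1)\lambda^{3+\eta}$.
   Context: Let $(V,d)$ be a finite metric space with $|V|=n\ge 2$ which is doubling with constant $\lambda$: for every $v\in V$ and $r>0$ the open ball $B_{2r}(v)=\{u:d(u,v)<2r\}$ is contained in the union of at most $\lambda$ open balls $B_r(w)$, $w\in V$. Fix an integer $\eta\ge2$ and a real $\tau$ with $1+\frac{1}{2^{\eta-1}-1}\le\tau\le 2^{\eta}$. For $L\subseteq V$ and $r>0$, a greedy partition of $L$ with parameter $r$ is obtained by: set $L_0=L$; while $L_i\ne\emptyset$ choose any $v_i\in L_i$, let $P_i=\{u\in L_i: d(u,v_i)<2^{-\eta-1}r\}$ with leader $v_i$, and set $L_{i+1}=L_i\setminus P_i$. Hierarchical partition construction: choose $r_0$ with $0<r_0<\min_{u\ne v}d(u,v)$ and put $r_j=\tau^j r_0$. Let $\mathcal S_0=\{\{v\}:v\in V\}$, the leader of $\{v\}$ being $v$. While $\mathcal S_j$ has more than one element: let $L_j$ be the set of leaders of the sets in $\mathcal S_j$, let $\mathcal S'_{j+1}$ be a greedy partition of $L_j$ with parameter $2r_{j+1}$, and let $\mathcal S_{j+1}$ consist, for each $P\in\mathcal S'_{j+1}$, of the set $\bigcup\{S\in\mathcal S_j:\mathrm{leader}(S)\in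 P\}$, whose leader is defined to be the leader of $P$. Each $\mathcal S_j$ is a partition of $V$. For $S,S'\in\mathcal S_j$, $S$ knows $S'$ (at level $j$) if there are $v\in S$, $u\in S'$ with $d(v,u)<r_j$. *)

From HB Require Import structures.
From mathcomp Require Import all_boot all_order all_algebra.
Set Implicit Arguments. Unset Strict Implicit. Unset Printing Implicit Defensive.
Import Order.TTheory GRing.Theory Num.Theory.
Local Open Scope ring_scope.

Section Defs.
Variables (R : realFieldType) (V : finType) (d : V -> V -> R).

Definition is_metric : Prop :=
  [/\ forall x, d x x = 0,
      forall x y, d x y = 0 -> x = y,
      forall x y, d x y = d y x
    & forall x y z, d x z <= d x y + d y z].

Definition ball (r : R) (v : V) : {set V} := [set u | d u v < r].

Definition doubling (lam : nat) : Prop :=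
  forall (v : V) (r : R), 0 < r ->
    exists W : {set V}, (#|W| <= lam)%N /\
      ball (2 * r) v \subset \bigcup_(w in W) ball r w.

(* A run of the greedy partition of L with ball radius rad
   (rad = 2^{-eta-1} * parameter): the list of (leader v_i, part P_i). *)
Fixpoint greedy_run (rad : R) (L : {set V}) (s : seq (V * {set V})) : Prop :=
  match s with
  | [::] => L = set0
  | (v, P) :: s' =>
      [/\ v \in L, P = [set u in L | d u v < rad] & greedy_run rad (L :\: P) s']
  end.

(* a level S_j: list of (leader, set) *)
Definition leaders (S : seq (V * {set V})) : {set V} :=
  [set v | v \in [seq x.1 | x <- S]].

Definition level_sets (S : seq (V * {set V})) : {set {set V}} :=
  [set A | A \in [seq x.2 | x <- S]].

Definition hier_step (eta : nat) (p : R) (S S' : seq (V * {set V})) : Prop :=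
  exists G : seq (V * {set V}),
    greedy_run (p / 2 ^+ eta.+1) (leaders S) G /\
    S' = [seq (x.1, \bigcup_(y <- S | y.1 \in x.2) y.2) | x : V * {set V} <- G].

Definition radius (tau r0 : R) (j : nat) : R := tau ^+ j * r0.

(* H = [:: S_0; S_1; ...; S_m] is a complete run of the hierarchical
   partition construction with parameters eta, tau, r0 *)
Definition hier_run (eta : nat) (tau r0 : R) (H : seq (seq (V * {set V}))) : Prop :=
  [/\ (0 < size H)%N,
      nth [::] H 0 = [seq (v, [set v]) | v <- enum V],
      forall j, (j.+1 < size H)%N ->
        (1 < size (nth [::] H j))%N /\
        hier_step eta (2 * radius tau r0 j.+1) (nth [::] H j) (nth [::] H j.+1)
    & size (nth [::] H (size H).-1) = 1%N].

Definition all_sets (H : seq (seq (V * {set V}))) : {set {set V}} :=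
  \bigcup_(j < size H) level_sets (nth [::] H j).

Definition knows (r : R) (A B : {set V}) : bool :=
  [exists v in A, exists u in B, d v u < r].

Definition knowing_pairs (tau r0 : R) (H : seq (seq (V * {set V})))
  : {set {set {set V}}} :=
  [set AB | [exists A : {set V}, exists B : {set V},
     [&& A != B, AB == [set A; B] &
         has (fun j => [&& A \in level_sets (nth [::] H j),
                           B \in level_sets (nth [::] H j) &
                           knows (radius tau r0 j) A B]) (iota 0 (size H))]]].

End Defs.

From HB Require Import structures.
From mathcomp Require Import all_boot all_order all_algebra zify ring lra.
Set Implicit Arguments. Unset Strict Implicit. Unset Printing Implicit Defensive.
Import Order.TTheory GRing.Theory Num.Theory.
Local Open Scope ring_scope.

(* Every level S_j is a partition of V into parts of radius < r_j/2 around
   their leaders, the leaders being pairwise at distance >= r_j/2^eta.  The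
   greedy step merges the parts of level j whose leaders lie within
   r_{j+1}/2^eta of a new leader, and the lower bound on tau is exactly what
   keeps the merged parts within radius r_{j+1}/2.
   A set that is new at level j+1 merges at least two sets of level j, so the
   number of new sets plus |S_{j+1}| is at most |S_j|; summing from the n
   singletons down to a single set gives at most 2n - 1 sets.
   For a knowing pair {A, B}, let A be the set leaving the hierarchy first, at
   its last level l.  As the levels refine each other, B is still a set of
   level l, and it knows A there since the radii increase.  The leaders of the
   sets knowing A at level l are r_l/2^eta-separated and lie within 4 r_l of
   the leader of A, so by doubling there are at most lambda^(3+eta) of them. *)

Lemma card_bigcup_le (I T : finType) (P : pred I) (F : I -> {set T}) :
  (#|\bigcup_(i | P i) F i| <= \sum_(i | P i) #|F i|)%N.
Proof.
elim/big_rec2: _ => [|i X n _ IH]; first by rewrite cards0.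
by apply: leq_trans (leq_card_setU _ _).1 _; rewrite leq_add2l.
Qed.

Lemma count_gt1_size_le_sumn (s : seq nat) : all (fun n => 0 < n)%N s ->
  (count (fun n => 1 < n)%N s + size s <= sumn s)%N.
Proof. elim: s => //= n s IH /andP[n_gt0 /IH]; lia. Qed.

Lemma card_setU_le_diff (T : finType) (X Y Z : {set T}) : Z \subset X ->
  (#|X :|: Y| <= #|X| + #|Y :\: Z|)%N.
Proof.
move=> ZX; apply: leq_trans (leq_card_setU X (Y :\: Z)).1.
apply/subset_leq_card/subsetP => u /setUP[uX | uY]; rewrite !inE ?uX //.
by case uZ: (u \in Z); rewrite ?uY ?orbT // (subsetP ZX u uZ).
Qed.

Lemma add_le_mul_of_ge (R : realFieldType) (a t : R) :
  1 < a -> 1 + 1 / (a - 1) <= t -> a + t <= t * a.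
Proof.
move=> a_gt1 t_ge; have a1_gt0 : 0 < a - 1 by rewrite subr_gt0.
rewrite -(ler_pM2r a1_gt0) mulrDl div1r mulVf ?gt_eqF // mul1r subrK in t_ge.
nra.
Qed.

Lemma mul2r_divXS (R : numFieldType) (x : R) n : 2 * x / 2 ^+ n.+1 = x / 2 ^+ n.
Proof. by rewrite exprS invfM mulrA [2 * x]mulrC mulfK ?pnatr_eq0. Qed.

Section Metric.
Variables (R : realFieldType) (V : finType) (d : V -> V -> R).
Hypothesis d_metric : is_metric d.

Lemma dist_xx x : d x x = 0.
Proof. by case: d_metric. Qed.

Lemma distC x y : d x y = d y x.
Proof. by case: d_metric. Qed.

Lemma dist_triangle x y z : d x z <= d x y + d y z.
Proof. by case: d_metric. Qed.

Lemma knowsC r A B : knows d r A B = knows d r B A.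
Proof.
suff knows_sym X Y : knows d r X Y -> knows d r Y X by apply/idP/idP; apply: knows_sym.
case/exists_inP => v vX /exists_inP[u uY duv].
by apply/exists_inP; exists u => //; apply/exists_inP; exists v; rewrite // distC.
Qed.

Lemma knows_le r r' A B : r <= r' -> knows d r A B -> knows d r' A B.
Proof.
move=> le_rr' /exists_inP[v vA /exists_inP[u uB duv]].
by apply/exists_inP; exists v => //; apply/exists_inP; exists u; rewrite // (lt_le_trans duv).
Qed.

Section Greedy.
Variable rad : R.
Hypothesis rad_gt0 : 0 < rad.

Lemma greedy_part L G x : greedy_run d rad L G -> x \in G ->
  [/\ x.1 \in x.2, x.2 \subset L & {in x.2, forall u, d u x.1 < rad}].
Proof.
elim: G L => [|[v P] G IH] L //= [vL -> /IH partG].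
rewrite inE => /predU1P[-> /= | /partG[x1 xL x_near]]; last first.
  by split=> //; apply: subset_trans xL (subsetDl _ _).
split; first by rewrite inE vL dist_xx.
  by apply/subsetP => u; rewrite inE => /andP[].
by move=> u; rewrite inE => /andP[].
Qed.

Lemma greedy_leader_mem L G x : greedy_run d rad L G -> x \in G -> x.1 \in L.
Proof. by move=> run xG; have [x1 /subsetP subL _] := greedy_part run xG; apply: subL. Qed.

Lemma greedy_tail_notin L v P G x u :
  greedy_run d rad L ((v, P) :: G) -> x \in G -> u \in x.2 -> u \notin P.
Proof.
case=> _ _ run xG ux; have [_ /subsetP subL _] := greedy_part run xG.
by have := subL u ux; rewrite inE => /andP[].
Qed.

Lemma greedy_uniq_leaders L G : greedy_run d rad L G -> uniq [seq x.1 | x <- G].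
Proof.
elim: G L => [|[v P] G IH] L // run; have [_ _ runG] := run.
rewrite /= (IH _ runG) andbT; have vP : v \in P by have [] := greedy_part run (mem_head _ _).
apply/mapP => -[x xG vx]; have [x1 _ _] := greedy_part runG xG.
by move: (greedy_tail_notin run xG x1); rewrite -vx vP.
Qed.

Lemma greedy_disjoint L G x y u : greedy_run d rad L G -> x \in G -> y \in G ->
  u \in x.2 -> u \in y.2 -> x = y.
Proof.
elim: G L => [|[v P] G IH] L // run; have [_ _ runG] := run; rewrite !inE.
case/predU1P => [-> | xG] /predU1P[-> | yG] //= ux uy.
- by move: (greedy_tail_notin run yG uy); rewrite ux.
- by move: (greedy_tail_notin run xG ux); rewrite uy.
- exact: IH runG xG yG ux uy.
Qed.

Lemma greedy_cover L G u : greedy_run d rad L G -> u \in L -> exists2 x, x \in G & u \in x.2.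
Proof.
elim: G L => [|[v P] G IH] L /=; first by move=> -> ; rewrite inE.
case=> _ defP run uL; have [uP | uNP] := boolP (u \in P); first by exists (v, P); rewrite ?mem_head.
by have [|x xG ux] := IH _ run; [rewrite inE uNP | exists x; rewrite // inE xG orbT].
Qed.

Lemma greedy_sep L G x y : greedy_run d rad L G -> x \in G -> y \in G -> x != y ->
  rad <= d x.1 y.1.
Proof.
suff head_far L' v P G' z : greedy_run d rad L' ((v, P) :: G') -> z \in G' -> rad <= d v z.1.
  elim: G L => [|[v P] G IH] L // run; have [_ _ runG] := run; rewrite !inE.
  case/predU1P => [-> | xG] /predU1P[-> | yG]; rewrite ?eqxx // => neq.
  - exact: head_far run yG.
  - by rewrite distC; apply: head_far run xG.
  - exact: IH runG xG yG neq.
move=> [_ defP runG] zG; have /setDP[zL] := greedy_leader_mem runG zG.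
by rewrite defP inE zL /= -leNgt distC.
Qed.

Lemma greedy_card L G : greedy_run d rad L G ->
  #|L| = sumn [seq #|x.2| | x : V * {set V} <- G].
Proof.
elim: G L => [|[v P] G IH] L /=; first by move=> ->; rewrite cards0.
case=> _ defP /IH <-; have PL : P \subset L.
  by rewrite defP; apply/subsetP => u; rewrite inE => /andP[].
by rewrite -(cardsID P L) (setIidPr PL).
Qed.
End Greedy.

Lemma doubling_iter lam k v s : doubling d lam -> 0 < s ->
  exists2 W : {set V}, (#|W| <= lam ^ k)%N &
    ball d (2 ^+ k * s) v \subset \bigcup_(w in W) ball d s w.
Proof.
move=> dbl s_gt0; elim: k v => [|k IH] v.
  by exists [set v]; rewrite ?cards1 // mul1r (bigcup_max v) ?inE.
have /fin_all_exists2[W' W'card W'cover] := IH.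
have [W0 [W0card W0cover]] := dbl v _ (mulr_gt0 (exprn_gt0 k (ltr0Sn _ 1)) s_gt0).
exists (\bigcup_(w in W0) W' w).
  apply: leq_trans (card_bigcup_le _ _) _; rewrite expnS.
  apply: leq_trans _ (leq_mul W0card (leqnn _)); rewrite -sum_nat_const.
  exact: leq_sum.
apply/subsetP => u; rewrite exprS -mulrA => /(subsetP W0cover)/bigcupP[w wW0 uw].
have /bigcupP[w' w'W' uw'] := subsetP (W'cover w) u uw.
by apply/bigcupP; exists w' => //; apply/bigcupP; exists w.
Qed.

Lemma card_separated_le lam k v s (M : {set V}) : doubling d lam -> 0 < s ->
  M \subset ball d (2 ^+ k * s) v ->
  {in M &, forall x y, x != y -> 2 * s <= d x y} -> (#|M| <= lam ^ k)%N.
Proof.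
move=> dbl s_gt0 /subsetP Mball Msep; have [W Wcard Wcover] := doubling_iter k v dbl s_gt0.
have MW : M \subset \bigcup_(w in W) (M :&: ball d s w).
  apply/subsetP => u uM; have /bigcupP[w wW uw] := subsetP Wcover u (Mball u uM).
  by apply/bigcupP; exists w; rewrite // inE uM.
apply: leq_trans (subset_leq_card MW) _; apply: leq_trans (card_bigcup_le _ _) _.
apply: leq_trans Wcard; rewrite -sum1_card; apply: leq_sum => w _.
apply/card_le1_eqP => x y; rewrite !inE => /andP[xM xw] /andP[yM yw].
apply/eqP/negPn/negP; rewrite eq_sym => xy.
have := Msep x y xM yM xy; apply/negP; rewrite -ltNge.
by rewrite mulr_natl mulr2n (le_lt_trans (dist_triangle x w y)) // ltrD // distC.
Qed.

Record level_inv (eta : nat) (r : R) (S : seq (V * {set V})) : Prop := LevelInv {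
  level_uniq_leaders : uniq [seq x.1 | x <- S];
  level_leader_mem : forall x, x \in S -> x.1 \in x.2;
  level_disjoint : forall x y u, x \in S -> y \in S -> u \in x.2 -> u \in y.2 -> x = y;
  level_cover : forall u, exists2 x, x \in S & u \in x.2;
  level_radius : forall x u, x \in S -> u \in x.2 -> d u x.1 < r / 2;
  level_sep : forall x y, x \in S -> y \in S -> x != y -> r / 2 ^+ eta <= d x.1 y.1 }.

Section Level.
Variables (eta : nat) (r : R) (S : seq (V * {set V})).
Hypothesis Sinv : level_inv eta r S.

Lemma level_leader_unique v B C : (v, B) \in S -> (v, C) \in S -> B = C.
Proof.
move=> vB vC; have vC' := level_leader_mem Sinv vC.
by case: (level_disjoint Sinv vB vC (level_leader_mem Sinv vB) vC').
Qed.

Lemma level_sets_disjoint B C u : B \in level_sets S -> C \in level_sets S ->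
  u \in B -> u \in C -> B = C.
Proof.
by rewrite !inE => /mapP[y yS ->] /mapP[z zS ->] uy uz; rewrite (level_disjoint Sinv yS zS uy uz).
Qed.

Lemma level_sets_nonempty B : B \in level_sets S -> exists u, u \in B.
Proof. by rewrite inE => /mapP[y yS ->]; exists y.1; rewrite (level_leader_mem Sinv yS). Qed.

Lemma card_knowing_le lam A : doubling d lam -> 0 < r -> A \in level_sets S ->
  (#|[set B in level_sets S | knows d r A B]| <= lam ^ (3 + eta))%N.
Proof.
move=> dbl r_gt0; rewrite inE => /mapP[a aS ->].
pose M := [set v | [exists B, ((v, B) \in S) && knows d r a.2 B]].
pose part v := odflt set0 [pick B | (v, B) \in S].
have partE v B : (v, B) \in S -> part v = B.
  rewrite /part; case: pickP => [C vC | none] vB; last by rewrite none in vB.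
  exact: level_leader_unique vC vB.
apply: (@leq_trans #|part @: M|).
  apply/subset_leq_card/subsetP => B; rewrite !inE => /andP[/mapP[[v C] vC ->] kn].
  by apply/imsetP; exists v; rewrite ?(partE v C) // inE; apply/existsP; exists C; rewrite vC.
apply: leq_trans (leq_imset_card _ _) _.
apply: (@card_separated_le _ _ a.1 (r / 2 ^+ eta.+1)) => //.
- by rewrite divr_gt0 ?exprn_gt0.
- apply/subsetP => v; rewrite !inE.
  case/existsP => B /andP[vB /exists_inP[p pa /exists_inP[q qB dpq]]].
  have := level_radius Sinv vB qB; have := level_radius Sinv aS pa.
  have := dist_triangle v q a.1; have := dist_triangle q p a.1.
  have -> : 2 ^+ (3 + eta) * (r / 2 ^+ eta.+1) = 4 * r.
    by rewrite addSnnS exprD mulrCA mulfK ?expf_neq0 ?pnatr_eq0 // mulrC -natrX.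
  rewrite (distC q p) (distC q v) /=; lra.
- move=> v w; rewrite !inE => /existsP[B /andP[vB _]] /existsP[C /andP[wC _]] vw.
  rewrite mulrA mul2r_divXS; apply: (level_sep Sinv vB wC).
  by apply/eqP => -[vw_eq _]; rewrite vw_eq eqxx in vw.
Qed.

End Level.

Definition merge (S : seq (V * {set V})) (x : V * {set V}) : V * {set V} :=
  (x.1, \bigcup_(y <- S | y.1 \in x.2) y.2).

Lemma mem_merge (S : seq (V * {set V})) (x : V * {set V}) (u : V) :
  reflect (exists2 y, y \in S & (y.1 \in x.2) && (u \in y.2)) (u \in (merge S x).2).
Proof.
rewrite /= -big_filter bigcup_seq; apply: (iffP bigcupP) => [[y] | [y yS /andP[yx uy]]].
  by rewrite mem_filter => /andP[yx yS] uy; exists y; rewrite ?yx.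
by exists y; rewrite // mem_filter yx.
Qed.

Section Step.
Variables (eta : nat) (r r' : R) (S G : seq (V * {set V})).
Hypotheses (r'_gt0 : 0 < r') (growth : r / 2 + r' / 2 ^+ eta <= r' / 2).
Hypotheses (Sinv : level_inv eta r S) (Grun : greedy_run d (r' / 2 ^+ eta) (leaders S) G).

Let rad_gt0 : 0 < r' / 2 ^+ eta.
Proof. by rewrite divr_gt0 ?exprn_gt0. Qed.

Lemma leader_covered y : y \in S -> exists2 x, x \in G & y.1 \in x.2.
Proof. by move=> yS; apply: greedy_cover Grun _; rewrite inE map_f. Qed.

Lemma part_leader_in_level x : x \in G -> exists2 y, y \in S & y.1 = x.1.
Proof. by move/(greedy_leader_mem rad_gt0 Grun); rewrite inE => /mapP[y yS ->]; exists y. Qed.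

Lemma step_inv : level_inv eta r' (map (merge S) G).
Proof.
split.
- by rewrite -map_comp; apply: greedy_uniq_leaders Grun.
- move=> _ /mapP[x xG ->]; have [y yS yx] := part_leader_in_level xG.
  have [x1 _ _] := greedy_part rad_gt0 Grun xG.
  apply/mem_merge; exists y => //; rewrite yx x1 /=.
  by rewrite -yx (level_leader_mem Sinv yS).
- move=> _ _ u /mapP[x xG ->] /mapP[x' x'G ->].
  move=> /mem_merge[y yS /andP[yx uy]] /mem_merge[y' y'S /andP[y'x' uy']].
  rewrite -(level_disjoint Sinv yS y'S uy uy') in y'x'.
  by rewrite (greedy_disjoint rad_gt0 Grun xG x'G yx y'x').
- move=> u; have [y yS uy] := level_cover Sinv u; have [x xG yx] := leader_covered yS.
  by exists (merge S x); [apply: map_f | apply/mem_merge; exists y; rewrite ?yx].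
- move=> _ u /mapP[x xG ->] /mem_merge[y yS /andP[yx uy]]; rewrite /merge /=.
  have [_ _ /(_ _ yx) near_x] := greedy_part rad_gt0 Grun xG.
  apply: le_lt_trans (dist_triangle u y.1 x.1) _; apply: lt_le_trans growth.
  exact: ltrD (level_radius Sinv yS uy) near_x.
- move=> _ _ /mapP[x xG ->] /mapP[x' x'G ->] neq.
  by apply: (greedy_sep rad_gt0 Grun xG x'G); apply: contraNneq neq => ->.
Qed.

Lemma step_refine B : B \in level_sets S ->
  exists2 C, C \in level_sets (map (merge S) G) & B \subset C.
Proof.
rewrite inE => /mapP[y yS ->]; have [x xG yx] := leader_covered yS.
exists (merge S x).2; first by rewrite inE map_f // map_f.
by apply/subsetP => u uy; apply/mem_merge; exists y; rewrite ?yx.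
Qed.

Lemma merge_small_part x : x \in G -> (#|x.2| <= 1)%N -> (merge S x).2 \in level_sets S.
Proof.
move=> xG x_small; have [y yS yx] := part_leader_in_level xG.
have [x1 _ _] := greedy_part rad_gt0 Grun xG.
suff -> : (merge S x).2 = y.2 by rewrite inE map_f.
apply/setP => u; apply/mem_merge/idP => [[y' y'S /andP[y'x uy']] | uy]; last first.
  by exists y; rewrite // yx x1.
have y'1 : y'.1 = x.1 by apply: (card_le1_eqP x_small).
have y'y : y'.1 \in y.2 by rewrite y'1 -yx (level_leader_mem Sinv yS).
by rewrite (level_disjoint Sinv yS y'S y'y (level_leader_mem Sinv y'S)).
Qed.

Lemma step_card_new :
  (#|level_sets (map (merge S) G) :\: level_sets S| + size (map (merge S) G) <= size S)%N.
Proof.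
have sizeS : size S = sumn [seq #|x.2| | x : V * {set V} <- G].
  rewrite -(greedy_card Grun) /leaders cardsE.
  by rewrite (card_uniqP (level_uniq_leaders Sinv)) size_map.
have new_merged : level_sets (map (merge S) G) :\: level_sets S \subset
    [set (merge S x).2 | x in [seq x : V * {set V} <- G | 1 < #|x.2|]%N].
  apply/subsetP => B; rewrite !inE => /andP[B_new /mapP[_ /mapP[x xG ->] defB]]; subst B.
  apply/imsetP; exists x => //; rewrite mem_filter xG andbT ltnNge.
  by apply: contra B_new => small; have := merge_small_part xG small; rewrite inE.
rewrite sizeS size_map; apply: leq_trans (count_gt1_size_le_sumn _); last first.
  apply/allP => _ /mapP[x xG ->]; apply/card_gt0P; exists x.1.
  by have [] := greedy_part rad_gt0 Grun xG.
rewrite size_map leq_add2r count_map -size_filter.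
apply: leq_trans (subset_leq_card new_merged) _.
exact: leq_trans (leq_imset_card _ _) (card_size _).
Qed.

End Step.

Section Hierarchy.
Variables (eta : nat) (tau r0 : R) (H : seq (seq (V * {set V}))).
Hypotheses (eta_gt1 : (1 < eta)%N) (tau_ge : 1 + 1 / (2 ^+ eta.-1 - 1) <= tau).
Hypotheses (r0_gt0 : 0 < r0) (r0_sep : forall u v : V, u != v -> r0 < d u v).
Hypothesis Hrun : hier_run d eta tau r0 H.

Local Notation S j := (nth [::] H j).
Local Notation r := (radius tau r0).

Let pow2_gt1 : 1 < (2 : R) ^+ eta.-1.
Proof. by rewrite -natrX ltr1n -{1}(expn0 2) ltn_exp2l // -ltnS prednK // ltnW. Qed.

Let tau_ge1 : 1 <= tau.
Proof. by apply: le_trans tau_ge; rewrite lerDl divr_ge0 ?ler01 // subr_ge0 ltW. Qed.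

Lemma radius_gt0 j : 0 < r j.
Proof. by rewrite mulr_gt0 // exprn_gt0 // (lt_le_trans ltr01). Qed.

Lemma radius_le j k : (j <= k)%N -> r j <= r k.
Proof. by move=> jk; apply: ler_wpM2r; [exact: ltW | exact: ler_weXn2l]. Qed.

Lemma radius_growth j : r j / 2 + r j.+1 / 2 ^+ eta <= r j.+1 / 2.
Proof.
have := add_le_mul_of_ge pow2_gt1 tau_ge; set a := 2 ^+ eta.-1 => step.
have -> : 2 ^+ eta = 2 * a by rewrite /a -exprS prednK // ltnW.
have -> : r j.+1 = tau * r j by rewrite /radius exprS mulrA.
have c_gt0 : 0 < r j / (2 * a).
  by rewrite divr_gt0 ?radius_gt0 // mulr_gt0 // (lt_trans ltr01).
have a_neq0 : a != 0 by rewrite gt_eqF // (lt_trans ltr01).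
have := ler_wpM2l (ltW c_gt0) step.
have -> : r j / (2 * a) * (a + tau) = r j / 2 + tau * r j / (2 * a) by field.
by have -> : r j / (2 * a) * (tau * a) = tau * r j / 2 by field.
Qed.

Lemma level0_inv : level_inv eta (r 0) (S 0).
Proof.
have [_ -> _ _] := Hrun; rewrite /radius expr0 mul1r.
have singletonP x : x \in [seq (v, [set v]) | v <- enum V] -> x = (x.1, [set x.1]).
  by case/mapP => v _ ->.
split.
- by rewrite -map_comp map_id enum_uniq.
- by move=> x /singletonP ->; rewrite set11.
- by move=> x y u /singletonP -> /singletonP -> /set1P <- /set1P <-.
- by move=> u; exists (u, [set u]); rewrite ?set11 // map_f ?mem_enum.
- by move=> x u /singletonP -> /set1P ->; rewrite dist_xx divr_gt0.
move=> x y /singletonP ex /singletonP ey xy; have x1y1 : x.1 != y.1.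
  by apply: contraNneq xy => x1y1; rewrite ex ey x1y1.
apply: le_trans (ltW (r0_sep x1y1)); rewrite ler_pdivrMr ?exprn_gt0 // ler_peMr ?(ltW r0_gt0) //.
by rewrite -natrX ler1n expn_gt0.
Qed.

Lemma hier_next j : (j.+1 < size H)%N ->
  exists2 G, greedy_run d (r j.+1 / 2 ^+ eta) (leaders (S j)) G & S j.+1 = map (merge (S j)) G.
Proof.
have [_ _ step _] := Hrun; case/step => _ [G [Grun ->]].
by exists G; rewrite // -mul2r_divXS.
Qed.

Lemma hier_inv j : (j < size H)%N -> level_inv eta (r j) (S j).
Proof.
elim: j => [_ | j IH jH]; first exact: level0_inv.
have [G Grun ->] := hier_next jH.
exact: step_inv (radius_gt0 _) (radius_growth j) (IH (ltnW jH)) Grun.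
Qed.

Lemma hier_refine i k B : (i <= k)%N -> (k < size H)%N -> B \in level_sets (S i) ->
  exists2 C, C \in level_sets (S k) & B \subset C.
Proof.
move=> ik kH Bi; elim: k ik kH => [|k IH]; first by rewrite leqn0 => /eqP <-; exists B.
rewrite leq_eqVlt ltnS => /predU1P[<- | ik] kH; first by exists B.
have [C Ck BC] := IH ik (ltnW kH); have [G Grun Sk1] := hier_next kH.
have [C' Ck1 CC'] := step_refine Grun Ck.
by exists C'; rewrite ?Sk1 // (subset_trans BC).
Qed.

Lemma level_sets_between i j k B : (i <= j <= k)%N -> (k < size H)%N ->
  B \in level_sets (S i) -> B \in level_sets (S k) -> B \in level_sets (S j).
Proof.
case/andP=> ij jk kH Bi Bk; have jH := leq_ltn_trans jk kH.
have [C Cj BC] := hier_refine ij jH Bi; have [C' C'k CC'] := hier_refine jk kH Cj.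
have [u uB] := level_sets_nonempty (hier_inv (leq_ltn_trans ij jH)) Bi.
have BC' := level_sets_disjoint (hier_inv kH) Bk C'k uB (subsetP (subset_trans BC CC') u uB).
suff -> : B = C by [].
by apply/eqP; rewrite eqEsubset BC BC'.
Qed.

Lemma card_sets_upto m : (m < size H)%N ->
  (#|\bigcup_(j < m.+1) level_sets (S j)| + size (S m) <= 2 * #|V|)%N.
Proof.
elim: m => [_ | m IH mH].
  rewrite big_ord1 /=; have [_ -> _ _] := Hrun.
  rewrite size_map -cardE mul2n -addnn leq_add2r cardsE.
  by apply: leq_trans (card_size _) _; rewrite !size_map -enumT -cardT.
have [G Grun Sm1] := hier_next mH; rewrite big_ord_recr /=.
have := step_card_new (radius_gt0 _) (hier_inv (ltnW mH)) Grun; rewrite -Sm1 => new_le.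
have sub : level_sets (S m) \subset \bigcup_(j < m.+1) level_sets (S j).
  exact: (bigcup_sup ord_max).
apply: leq_trans (leq_add (card_setU_le_diff _ sub) (leqnn _)) _.
by rewrite -addnA (leq_trans _ (IH (ltnW mH))) // leq_add2l.
Qed.

Lemma card_all_sets : (#|all_sets H| <= 2 * #|V| - 1)%N.
Proof.
have [H_gt0 _ _ last_size] := Hrun.
have last_lt : ((size H).-1 < size H)%N by rewrite ltn_predL.
by have := card_sets_upto last_lt; rewrite prednK // last_size /all_sets; lia.
Qed.

Lemma mem_all_sets j A : (j < size H)%N -> A \in level_sets (S j) -> A \in all_sets H.
Proof. by move=> jH Aj; apply/bigcupP; exists (Ordinal jH). Qed.

Definition last_level (A : {set V}) : nat := \max_(j < size H | A \in level_sets (S j)) j.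

Lemma last_level_ge A j : (j < size H)%N -> A \in level_sets (S j) -> (j <= last_level A)%N.
Proof. by move=> jH; apply: (@leq_bigmax_cond _ _ _ (Ordinal jH)). Qed.

Lemma last_levelP A : A \in all_sets H ->
  (last_level A < size H)%N /\ A \in level_sets (S (last_level A)).
Proof.
case/bigcupP => j _ Aj; rewrite /last_level (bigop.bigmax_eq_arg j) //.
by case: arg_maxnP => // i Ai _; split.
Qed.

Definition knowers (A : {set V}) : {set {set V}} :=
  [set B in level_sets (S (last_level A)) | knows d (r (last_level A)) A B].

Lemma mem_knowers A B j : (j < size H)%N -> A \in level_sets (S j) -> B \in level_sets (S j) ->
  knows d (r j) A B -> (last_level A <= last_level B)%N -> B \in knowers A.
Proof.
move=> jH Aj Bj AB le_AB; have jA := last_level_ge jH Aj.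
have [BH BlB] := last_levelP (mem_all_sets jH Bj).
rewrite inE (level_sets_between _ BH Bj BlB) ?jA //=.
exact: knows_le (radius_le jA) AB.
Qed.

Lemma knowing_pairs_sub :
  knowing_pairs d tau r0 H \subset \bigcup_(A in all_sets H) [set [set A; B] | B in knowers A].
Proof.
apply/subsetP => AB; rewrite inE => /existsP[A /existsP[B /and3P[_ /eqP -> /hasP[j]]]].
rewrite mem_iota => /andP[_ jH] /and3P[Aj Bj kn].
have [le_AB | /ltnW le_BA] := leqP (last_level A) (last_level B).
  apply/bigcupP; exists A; first exact: mem_all_sets Aj.
  by apply: imset_f; apply: mem_knowers kn le_AB.
rewrite setUC; apply/bigcupP; exists B; first exact: mem_all_sets Bj.
by apply: imset_f; apply: mem_knowers Aj _ le_BA; rewrite // knowsC.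
Qed.

Lemma card_knowing_pairs lam : doubling d lam ->
  (#|knowing_pairs d tau r0 H| <= #|all_sets H| * lam ^ (3 + eta))%N.
Proof.
move=> dbl; apply: leq_trans (subset_leq_card knowing_pairs_sub) _.
apply: leq_trans (card_bigcup_le _ _) _; rewrite -sum_nat_const; apply: leq_sum => A Aall.
have [AH AlA] := last_levelP Aall.
apply: leq_trans (leq_imset_card _ _) (card_knowing_le (hier_inv AH) dbl (radius_gt0 _) AlA).
Qed.

End Hierarchy.
End Metric.

Theorem corollary1 (R : realFieldType) (V : finType) (d : V -> V -> R)
    (lam eta : nat) (tau r0 : R) (H : seq (seq (V * {set V}))) :
  is_metric d ->
  (2 <= #|V|)%N ->
  doubling d lam ->
  (2 <= eta)%N ->
  1 + 1 / (2 ^+ eta.-1 - 1) <= tau ->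
  tau <= 2 ^+ eta ->
  0 < r0 ->
  (forall u v : V, u != v -> r0 < d u v) ->
  hier_run d eta tau r0 H ->
  (#|all_sets H| <= 2 * #|V| - 1)%N /\
  (#|knowing_pairs d tau r0 H| <= (2 * #|V| - 1) * lam ^ (3 + eta))%N.
Proof.
move=> d_metric _ dbl eta_gt1 tau_ge _ r0_gt0 r0_sep Hrun.
have card_sets := card_all_sets d_metric eta_gt1 tau_ge r0_gt0 r0_sep Hrun.
split=> //; apply: leq_trans (card_knowing_pairs d_metric eta_gt1 tau_ge r0_gt0 r0_sep Hrun dbl) _.
by rewrite leq_mul2r card_sets orbT.
Qed.
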